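(* Let $A\in\mathbb{R}^{m\times n}$, $b\in\mathbb{R}^m$ and $\delta\ge 0$, and assume the set $\mathcal{F}=\{x\in\mathbb{R}^n:\|Ax-b\|\le\delta\}$ is nonempty. Consider the zero-norm problem $$\text{(P)}\qquad \min_{x\in\mathbb{R}^n}\{\|x\|_0:\ \|Ax-b\|\le\delta\}$$ and the problem $$\text{(MPEC)}\qquad \min_{x,v\in\mathbb{R}^n}\{\langle e,e-v\rangle:\ \|Ax-b\|\le\delta,\ \langle v,|x|\rangle=0,\ 0\le v\le e\}.$$ Then: (a) every locally optimal solution of (MPEC) has the form $(x^*,e-\operatorname{sign}(|x^*|))$ for some $x^*\in\mathbb{R}^n$; (b) $x^*$ is a locally optimal solution of (P) if and only if $(x^*,e-\operatorname{sign}(|x^*|))$ is a locally optimal solution of (MPEC).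
   Context: $\|\cdot\|$ is the Euclidean norm, $\|x\|_0$ is the number of nonzero components of $x$, $e\in\mathbb{R}^n$ is the vector of all ones, $|x|$ is the componentwise absolute value, $\operatorname{sign}$ is applied componentwise (so $\operatorname{sign}(|x|)_i=1$ if $x_i\neq0$ and $0$ otherwise), and inequalities between vectors are componentwise. *)

From mathcomp Require Import all_boot all_order all_algebra.
From mathcomp Require Import reals.
Set Implicit Arguments. Unset Strict Implicit. Unset Printing Implicit Defensive.
Import Order.TTheory GRing.Theory Num.Theory.
Local Open Scope ring_scope.

Section Defs.
Variable R : realType.

Definition enorm (k : nat) (x : 'cV[R]_k) : R := Num.sqrt (\sum_i x i 0 ^+ 2).

Definition znorm (n : nat) (x : 'cV[R]_n) : nat := #|[set i | x i 0 != 0]|.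

Definition evec (n : nat) : 'cV[R]_n := const_mx 1.

Definition vabs (n : nat) (x : 'cV[R]_n) : 'cV[R]_n := map_mx Num.norm x.
Definition vsign (n : nat) (x : 'cV[R]_n) : 'cV[R]_n := map_mx Num.sg x.

Definition inner (n : nat) (u w : 'cV[R]_n) : R := \sum_i u i 0 * w i 0.

Definition feasP (m n : nat) (A : 'M[R]_(m, n)) (b : 'cV[R]_m) (delta : R)
  (x : 'cV[R]_n) : Prop := enorm (A *m x - b) <= delta.

Definition P_locmin (m n : nat) (A : 'M[R]_(m, n)) (b : 'cV[R]_m) (delta : R)
  (xs : 'cV[R]_n) : Prop :=
  feasP A b delta xs /\
  exists eps : R, 0 < eps /\
    forall x, feasP A b delta x -> enorm (x - xs) < eps -> (znorm xs <= znorm x)%N.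

Definition feasMPEC (m n : nat) (A : 'M[R]_(m, n)) (b : 'cV[R]_m) (delta : R)
  (x v : 'cV[R]_n) : Prop :=
  [/\ enorm (A *m x - b) <= delta, inner v (vabs x) = 0 &
      forall i, 0 <= v i 0 <= 1].

Definition objMPEC (n : nat) (v : 'cV[R]_n) : R := inner (evec n) (evec n - v).

Definition MPEC_locmin (m n : nat) (A : 'M[R]_(m, n)) (b : 'cV[R]_m) (delta : R)
  (xs vs : 'cV[R]_n) : Prop :=
  feasMPEC A b delta xs vs /\
  exists eps : R, 0 < eps /\
    forall x v, feasMPEC A b delta x v ->
      enorm (col_mx (x - xs) (v - vs)) < eps -> objMPEC vs <= objMPEC v.

End Defs.

From mathcomp Require Import all_boot all_order all_algebra.
From mathcomp Require Import reals.
From mathcomp Require Import ring lra.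
Import Order.TTheory GRing.Theory Num.Theory.
Local Open Scope ring_scope.

(* For MPEC-feasible (x, v), complementarity forces v_i = 0 on the support of
   x, so <e, e - v> >= ||x||_0, with equality at v = e - sign|x|.  Hence a local
   minimum of (P) yields one of (MPEC).  Conversely ||.||_0 is lower
   semicontinuous, so every feasible point is a local minimum of (P).  Finally,
   at a local minimum (x, v) of (MPEC), raising v_i at an index with x_i = 0
   keeps feasibility and lowers the objective unless v_i is already 1. *)

Set Implicit Arguments.

Section ZeroNormMPEC.
Variable R : realType.

Lemma normr_coord_le_enorm k (x : 'cV[R]_k) i : `|x i 0| <= enorm x.
Proof.
rewrite /enorm -sqrtr_sqr ler_wsqrtr // (bigD1 i) //= lerDl.
by apply: sumr_ge0 => j _; rewrite sqr_ge0.
Qed.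

Lemma enorm_col_mxl k l (x : 'cV[R]_k) (y : 'cV[R]_l) :
  enorm x <= enorm (col_mx x y).
Proof.
rewrite /enorm ler_wsqrtr // big_split_ord /=.
under [X in _ <= X + _]eq_bigr => i _ do rewrite col_mxEu.
by rewrite lerDl; apply: sumr_ge0 => j _; rewrite sqr_ge0.
Qed.

Lemma enorm_col_mx0l k l (y : 'cV[R]_l) : enorm (col_mx (0 : 'cV[R]_k) y) = enorm y.
Proof.
rewrite /enorm big_split_ord /=.
rewrite big1 ?add0r; last by move=> i _; rewrite col_mxEu mxE expr0n.
by congr Num.sqrt; apply: eq_bigr => i _; rewrite col_mxEd.
Qed.

Lemma enorm_scale_delta k (t : R) (i : 'I_k) : enorm (t *: delta_mx i 0) = `|t|.
Proof.
rewrite /enorm (bigD1 i) //= big1 ?addr0; first by rewrite !mxE !eqxx mulr1 sqrtr_sqr.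
by move=> j /negbTE ji; rewrite !mxE ji mulr0 expr0n.
Qed.

Lemma znorm_natr n (x : 'cV[R]_n) : (znorm x)%:R = \sum_i ((x i 0 != 0)%:R : R).
Proof.
rewrite /znorm -sum1_card natr_sum big_mkcond /=; apply: eq_bigr => i _.
by rewrite inE; case: ifP.
Qed.

Lemma znorm_lsc n (xs : 'cV[R]_n) : exists2 eps : R, 0 < eps &
  forall x, enorm (x - xs) < eps -> (znorm xs <= znorm x)%N.
Proof.
pose eps := \big[Num.min/1]_(i | xs i 0 != 0) `|xs i 0|.
have eps_gt0 : 0 < eps.
  apply: (big_ind (fun y => 0 < y)) => // [a c a0 c0|i]; first by rewrite lt_min a0.
  by rewrite normr_gt0.
have eps_le i : xs i 0 != 0 -> eps <= `|xs i 0|.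
  by move=> xi; rewrite /eps (bigD1 i) //= ge_min lexx.
exists eps => // x near_x; apply: subset_leq_card; apply/subsetP => i.
rewrite !inE => xsi; apply: contraTneq near_x => xi0; rewrite -leNgt.
apply: le_trans (eps_le i xsi) _.
by have := normr_coord_le_enorm (x - xs) i; rewrite !mxE xi0 sub0r normrN.
Qed.

Variables (m n : nat) (A : 'M[R]_(m, n)) (b : 'cV[R]_m) (delta : R).

Lemma feasP_P_locmin xs : feasP A b delta xs -> P_locmin A b delta xs.
Proof.
move=> feas; split => //; have [eps eps_gt0 lsc] := znorm_lsc xs.
by exists eps; split => // x _; apply: lsc.
Qed.

Lemma feasMPEC_v_eq0 x v i : feasMPEC A b delta x v -> x i 0 != 0 -> v i 0 = 0.
Proof.
move=> [_ compl v01] xi.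
have summand_ge0 j : xpredT j -> 0 <= v j 0 * vabs x j 0.
  by move=> _; rewrite mxE mulr_ge0 //; case/andP: (v01 j).
have /eqP := psumr_eq0P summand_ge0 compl (i := i) isT.
by rewrite mxE mulf_eq0 normr_eq0 (negbTE xi) orbF => /eqP.
Qed.

Lemma znorm_le_objMPEC x v : feasMPEC A b delta x v -> (znorm x)%:R <= objMPEC v.
Proof.
move=> feas; rewrite znorm_natr /objMPEC /inner; apply: ler_sum => i _.
rewrite /evec !mxE mul1r.
have [xi0|xi] := eqVneq (x i 0) 0; last by rewrite (feasMPEC_v_eq0 i feas xi) subr0.
by case: feas => _ _ /(_ i) /andP[_ vi1]; rewrite subr_ge0.
Qed.

Lemma objMPEC_canonical xs : objMPEC (evec R n - vsign (vabs xs)) = (znorm xs)%:R.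
Proof.
rewrite /objMPEC /inner znorm_natr; apply: eq_bigr => i _.
by rewrite /evec !mxE sgr_norm mul1r opprB addrC subrK.
Qed.

Lemma feasMPEC_canonical xs :
  feasP A b delta xs -> feasMPEC A b delta xs (evec R n - vsign (vabs xs)).
Proof.
move=> feas; split => // [|i]; rewrite ?/inner; last first.
  by rewrite !mxE sgr_norm; case: (xs i 0 != 0); rewrite ?subr0 ?subrr ?ler01 ?lexx.
rewrite big1 // => i _; rewrite !mxE sgr_norm.
by have [->|_] := eqVneq (xs i 0) 0; rewrite ?normr0 ?mulr0 ?subrr ?mul0r.
Qed.

Lemma P_locmin_MPEC_locmin xs :
  P_locmin A b delta xs -> MPEC_locmin A b delta xs (evec R n - vsign (vabs xs)).
Proof.
move=> [feas [eps [eps_gt0 locmin]]]; split; first exact: feasMPEC_canonical.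
exists eps; split => // x v feas_xv near_xv.
rewrite objMPEC_canonical; apply: le_trans (znorm_le_objMPEC feas_xv).
rewrite ler_nat; apply: locmin; first by case: feas_xv.
exact: le_lt_trans (enorm_col_mxl _ _) near_xv.
Qed.

Lemma objMPEC_add_delta (v : 'cV[R]_n) t i :
  objMPEC (v + t *: delta_mx i 0) = objMPEC v - t.
Proof.
have sum_delta : \sum_j (delta_mx i 0 : 'cV[R]_n) j 0 = 1.
  rewrite (bigD1 i) //= big1 ?addr0 => [|j /negbTE ji]; first by rewrite mxE !eqxx.
  by rewrite mxE ji.
rewrite /objMPEC /inner -[t in RHS]mulr1 -sum_delta mulr_sumr -sumrB.
by apply: eq_bigr => j _; rewrite !mxE; ring.
Qed.

Lemma feasMPEC_add_delta x v t i :
  feasMPEC A b delta x v -> x i 0 = 0 -> 0 <= t <= 1 - v i 0 ->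
  feasMPEC A b delta x (v + t *: delta_mx i 0).
Proof.
move=> [feas compl v01] xi0 /andP[t0 t1]; split => // [|j].
  rewrite -compl /inner; apply: eq_bigr => j _; rewrite !mxE eqxx andbT.
  by have [->|ji] := eqVneq j i; rewrite ?xi0 ?normr0 !mulr0 ?addr0.
rewrite !mxE eqxx andbT; have [->|_] := eqVneq j i; last by rewrite mulr0 addr0.
by case/andP: (v01 i) => vi0 _; rewrite mulr1; apply/andP; split; lra.
Qed.

Lemma MPEC_locmin_canonical x v :
  MPEC_locmin A b delta x v -> v = evec R n - vsign (vabs x).
Proof.
move=> [feas [eps [eps_gt0 locmin]]].
apply/matrixP => i j; rewrite (ord1 j) {j} !mxE sgr_norm.
have [xi0|xi] := eqVneq (x i 0) 0; last by rewrite (feasMPEC_v_eq0 i feas xi) subrr.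
have [_ _ /(_ i) /andP[vi0 vi1]] := feas.
rewrite subr0; apply/eqP; rewrite eq_le vi1 leNgt; apply/negP => vi_lt1.
pose t := Num.min (1 - v i 0) (eps / 2).
have t_gt0 : 0 < t by rewrite lt_min subr_gt0 vi_lt1 divr_gt0.
have feas_t : feasMPEC A b delta x (v + t *: delta_mx i 0).
  by apply: feasMPEC_add_delta; rewrite // ltW //= ge_min lexx.
have near_t : enorm (col_mx (x - x) (v + t *: delta_mx i 0 - v)) < eps.
  rewrite subrr addrC addKr enorm_col_mx0l enorm_scale_delta gtr0_norm //.
  by rewrite gt_min; apply/orP; right; lra.
by have := locmin _ _ feas_t near_t; rewrite objMPEC_add_delta; lra.
Qed.

End ZeroNormMPEC.

Theorem proposition2p1 (R : realType) (m n : nat) (A : 'M[R]_(m, n))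
  (b : 'cV[R]_m) (delta : R) :
  0 <= delta ->
  (exists x : 'cV[R]_n, feasP A b delta x) ->
  (forall x v : 'cV[R]_n, MPEC_locmin A b delta x v ->
     v = evec R n - vsign (vabs x)) /\
  (forall xs : 'cV[R]_n,
     P_locmin A b delta xs <-> MPEC_locmin A b delta xs (evec R n - vsign (vabs xs))).
Proof.
move=> _ _; split=> [x v|xs]; first exact: MPEC_locmin_canonical.
split; first exact: P_locmin_MPEC_locmin.
by move=> [[feas _ _] _]; apply: feasP_P_locmin.
Qed.
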